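(* Let $\mu$ be as in the context and let $(\Phi,\Phi^\star)$ be a pair of finite Young functions with $\Phi^\star$ the Legendre transform of $\Phi$, such that $\lim_{x\to\infty}\Phi^\star(x)/x^2=\infty$ and such that $x\mapsto\Phi^\star(\sqrt{x})$ (for $x\ge0$, extended evenly) is also a Young function. Suppose that for some $r_0\in[0,\infty)$ the partial Orlicz super Poincaré inequality holds: there is a function $\beta:(r_0,\infty)\to[0,\infty)$ such that for every $r>r_0$ and every admissible $f$, \[\int f^2\,d\mu\le r\int|\nabla f|^2\,d\mu+\beta(r)\,\|f\|_\Phi^2.\] Then there is a function $\tilde\beta:(8r_0,\infty)\to[0,\infty)$ (depending only on $\beta$, $\Phi$ and $\mu$) such that for every $r>8r_0$ and every admissible $f$, \[\int f^2\,d\mu\le r\int|\nabla f|^2\,d\mu+\tilde\beta(r)\Big(\int|f|\,d\mu\Big)^2.\]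
   Context: Setting: $V:\mathbb R^n\to\mathbb R$ smooth with $\int e^{-V}dx<\infty$, $\mu(dx)=Z^{-1}e^{-V(x)}dx$ a probability measure on $\mathbb R^n$; ''admissible $f$'' means $f\in L^2(\mu)$ locally Lipschitz with $\int|\nabla f|^2d\mu<\infty$. A Young function is an even convex function $\Phi:\mathbb R\to[0,\infty)$ with $\Phi(0)=0$ and $\lim_{x\to\infty}\Phi(x)=\infty$. The Legendre transform is $\Phi^\star(y)=\sup_x(xy-\Phi(x))$. The Luxemburg norm is $\|f\|_\Phi=\inf\{\lambda>0:\int\Phi(|f|/\lambda)\,d\mu\le1\}$. *)

From HB Require Import structures.
From mathcomp Require Import all_boot all_order all_algebra.
From mathcomp Require Import all_classical all_reals all_analysis.
Set Implicit Arguments.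
Unset Strict Implicit.
Unset Printing Implicit Defensive.
Import Order.TTheory GRing.Theory Num.Theory.
Import numFieldNormedType.Exports.
Local Open Scope classical_set_scope.
Local Open Scope ring_scope.

Section Defs.
Context {R : realType}.

(* Lebesgue integral over R^n = 'rV[R]_n of a [0,+oo]-valued function,
   computed as the iterated one-dimensional Lebesgue integral
   (equal to the integral against n-dimensional Lebesgue measure for
   nonnegative measurable integrands, by Tonelli). *)
Fixpoint leb_int (n : nat) : ('rV[R]_n -> \bar R) -> \bar R :=
  match n return ('rV[R]_n -> \bar R) -> \bar R with
  | 0%N => fun g => g 0
  | m.+1 => fun g =>
      (\int[@lebesgue_measure R]_(t in [set: R])
         leb_int (fun y : 'rV[R]_m => g (row_mx (\row_(_ < 1) t) y)))%E
  end.

Fixpoint iter_derive (n : nat) (vs : seq 'rV[R]_n) (f : 'rV[R]_n -> R) :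
    'rV[R]_n -> R :=
  match vs with
  | [::] => f
  | v :: vs' => iter_derive vs' (fun x => derive f x v)
  end.

Definition smooth (n : nat) (f : 'rV[R]_n -> R) :=
  forall (vs : seq 'rV[R]_n) (x : 'rV[R]_n), differentiable (iter_derive vs f) x.

Definition Zconst (n : nat) (V : 'rV[R]_n -> R) : \bar R :=
  leb_int (fun x => (expR (- V x))%:E).

(* \int g d mu  for mu = Z^{-1} e^{-V} dx and g >= 0 *)
Definition mu_int (n : nat) (V : 'rV[R]_n -> R) (g : 'rV[R]_n -> R) : \bar R :=
  (leb_int (fun x => (g x * expR (- V x))%:E) * ((fine (Zconst V))^-1)%:E)%E.

Definition grad_sq (n : nat) (f : 'rV[R]_n -> R) (x : 'rV[R]_n) : R :=
  \sum_(i < n) (derive f x (delta_mx 0 i)) ^+ 2.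

Definition locally_lipschitz (n : nat) (f : 'rV[R]_n -> R) :=
  forall x : 'rV[R]_n, exists e : R, exists L : R, 0 < e /\
    forall y z, ball x e y -> ball x e z -> `|f y - f z| <= L * `|y - z|.

Definition admissible (n : nat) (V : 'rV[R]_n -> R) (f : 'rV[R]_n -> R) :=
  [/\ locally_lipschitz f,
      (mu_int V (fun x => (f x ^+ 2)%R) < +oo)%E &
      (mu_int V (grad_sq f) < +oo)%E].

Definition young (Phi : R -> R) :=
  [/\ forall x, Phi (- x) = Phi x,
      forall x y t, 0 <= t <= 1 ->
        Phi (t * x + (1 - t) * y) <= t * Phi x + (1 - t) * Phi y,
      forall x, 0 <= Phi x,
      Phi 0 = 0 &
      Phi x @[x --> +oo] --> +oo].

Definition legendre_set (Phi : R -> R) (y : R) : set R :=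
  [set x * y - Phi x | x in [set: R]].

Definition legendre (Phi : R -> R) (y : R) : R := sup (legendre_set Phi y).

Definition luxemburg (n : nat) (V : 'rV[R]_n -> R) (Phi : R -> R)
    (f : 'rV[R]_n -> R) : \bar R :=
  ereal_inf [set l%:E | l in
    [set l : R | 0 < l /\ (mu_int V (fun x => Phi (`|f x| / l)%R) <= 1%:E)%E]].

End Defs.

From HB Require Import structures.
From mathcomp Require Import all_boot all_order all_algebra.
From mathcomp Require Import all_classical all_reals all_analysis.
From mathcomp Require Import measurable_realfun ring lra.
Import Order.TTheory GRing.Theory Num.Theory.
Import numFieldNormedType.Exports.
Local Open Scope classical_set_scope.
Local Open Scope ring_scope.

(* Because Phi^* grows faster than x^2, Phi grows slower than x^2: for every M > 0
   there is C with Phi x <= x^2 / M + C |x|.  Integrating this against mu gives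
   ||f||_Phi <= sqrt (2 a / M) + 2 C i with a = \int f^2 and i = \int |f|, hence
   ||f||_Phi^2 <= 4 a / M + 8 C^2 i^2.  Applying the hypothesis at r / 2 > r0 with
   M = 8 beta(r/2) + 8, the Luxemburg term is at most a / 2 + 8 beta(r/2) C^2 i^2,
   and a / 2 is absorbed into the left-hand side. *)

Section Young.
Context {R : realType} {Phi : R -> R}.
Hypothesis Y : young Phi.

Lemma young_ratio_le x z : 0 <= x -> 0 < z -> x <= z -> Phi x * z <= x * Phi z.
Proof.
case: Y => _ conv _ Phi0 _ x0 z0 xz.
have t01 : 0 <= x / z <= 1 by rewrite divr_ge0 ?(ltW z0) //= ler_pdivrMr // mul1r.
have := conv z 0 (x / z) t01; rewrite !mulr0 !addr0 Phi0 mulr0 addr0.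
by rewrite mulfVK ?gt_eqF // -ler_pdivlMr // mulrAC.
Qed.

Lemma young_monotone x y : 0 <= x -> x <= y -> Phi x <= Phi y.
Proof.
move=> x0 xy; have [y0|y_neq0] := eqVneq y 0.
  by have -> : x = y by apply/le_anti; rewrite xy y0 x0.
have y_gt0 : 0 < y by rewrite lt_def y_neq0 (le_trans x0 xy).
have Phiy_ge0 : 0 <= Phi y by case: Y.
rewrite -(ler_pM2r y_gt0); apply: (le_trans (young_ratio_le _ _ x0 y_gt0 xy)).
by rewrite mulrC ler_wpM2l.
Qed.

Lemma young_normr x : Phi `|x| = Phi x.
Proof.
have [x0|x0] := leP 0 x; first by rewrite ger0_norm.
by rewrite ltr0_norm //; case: Y.
Qed.

Lemma measurable_young : measurable_fun setT Phi.
Proof.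
have -> : Phi = (fun y => Phi (Num.max y 0)) \o (fun x => `|x|).
  by apply/funext => x /=; rewrite max_l // young_normr.
apply: measurableT_comp; last exact: normr_measurable.
apply: nondecreasing_measurable => // a b ab; apply: young_monotone.
  by rewrite le_max lexx orbT.
by rewrite ge_max !le_max ab lexx !orbT.
Qed.

Lemma legendre_slope_le x : 0 < x -> legendre Phi (Phi x / x) <= Phi x.
Proof.
move=> x_gt0; set m := Phi x / x.
have Phi_ge0 z : 0 <= Phi z by case: Y.
have m_ge0 : 0 <= m by rewrite divr_ge0 // ltW.
apply: ge_sup; first by exists (0 * m - Phi 0), 0.
move=> _ [z _ <-]; have [zx|xz] := leP z x.
  rewrite lerBlDr ler_wpDr //; apply: le_trans (ler_wpM2r m_ge0 zx) _.
  by rewrite /m mulrC mulfVK ?gt_eqF.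
have z_gt0 : 0 < z := lt_trans x_gt0 xz.
have mz : z * m <= Phi z.
  rewrite /m mulrA ler_pdivrMr // [z * _]mulrC [Phi z * x]mulrC.
  exact: young_ratio_le (ltW x_gt0) z_gt0 (ltW xz).
by apply: le_trans (Phi_ge0 x); rewrite subr_le0.
Qed.

(* For x > 0 and m := Phi x / x, Phi^*(m) <= Phi x = m x, so the growth of Phi^*
   bounds m by x / M unless m lies below the growth threshold. *)
Lemma young_subquadratic :
  (legendre Phi x / x ^+ 2) @[x --> +oo] --> +oo ->
  forall M, 0 < M -> exists2 C, 0 <= C & forall x, Phi x <= x ^+ 2 / M + C * `|x|.
Proof.
move=> growth M M_gt0; have /cvgryPge /(_ M) [y0 [_ Hy0]] := growth.
exists (Num.max y0 0); first by rewrite le_max lexx orbT.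
have pos x : 0 < x -> Phi x <= x ^+ 2 / M + Num.max y0 0 * x.
  move=> x_gt0; set m := Phi x / x.
  have Phi_xm : Phi x = m * x by rewrite /m mulfVK ?gt_eqF.
  have m_ge0 : 0 <= m by rewrite divr_ge0 ?(ltW x_gt0) //; case: Y.
  suff mb : m <= x / M + Num.max y0 0.
    rewrite Phi_xm; apply: (le_trans (ler_wpM2r (ltW x_gt0) mb)).
    by rewrite mulrDl expr2 mulrAC.
  have [mC|Cm] := leP m (Num.max y0 0).
    by apply: (le_trans mC); rewrite lerDr divr_ge0 ?ltW.
  have m_gt0 : 0 < m by apply: le_lt_trans Cm; rewrite le_max lexx orbT.
  have y0m : y0 < m by apply: le_lt_trans Cm; rewrite le_max lexx.
  have := Hy0 _ y0m; rewrite ler_pdivlMr ?exprn_gt0 // => /le_trans.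
  move=> /(_ _ (legendre_slope_le _ x_gt0)).
  rewrite Phi_xm expr2 mulrA [m * x]mulrC ler_pM2r // => Mm.
  by apply: ler_wpDr; [rewrite le_max lexx orbT | rewrite ler_pdivlMr // mulrC].
move=> x; have [x_lt0|x_gt0|->] := ltgtP x 0.
- have -> : Phi x = Phi (- x) by case: Y => ->.
  by rewrite ltr0_norm // -sqrrN pos // oppr_gt0.
- by rewrite gtr0_norm // pos.
- by case: Y => _ _ _ -> _; rewrite expr0n /= mul0r normr0 mulr0 addr0.
Qed.

End Young.

(* 'rV[R]_m carries no sigma-algebra here: a function on it is called measurable
   when it is measurable along every measurable family of coordinates. *)
Definition row_measurable {R : realType} {m : nat} {d} {T : measurableType d}
    (g : 'rV[R]_m -> T) :=
  forall d' (S : measurableType d') (b : 'I_m -> S -> R),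
  (forall i, measurable_fun setT (b i)) -> measurable_fun setT (fun s => g (\row_i b i s)).

Definition row_measurable_fam {R : realType} {m : nat} {d} {T : measurableType d}
    (F : T -> 'rV[R]_m -> \bar R) :=
  forall d' (S : measurableType d') (phi : S -> T) (b : 'I_m -> S -> R),
  measurable_fun setT phi -> (forall i, measurable_fun setT (b i)) ->
  measurable_fun setT (fun s => F (phi s) (\row_i b i s)).

Section RowMeasurable.
Context {R : realType}.

Lemma row_measurable_comp {m d1 d2} {T1 : measurableType d1} {T2 : measurableType d2}
    {g : 'rV[R]_m -> T1} {h : T1 -> T2} :
  row_measurable g -> measurable_fun setT h -> row_measurable (fun x => h (g x)).
Proof. by move=> mg mh d S b mb; exact: measurableT_comp mh (mg _ _ _ mb). Qed.

Lemma row_measurableD {m} {g h : 'rV[R]_m -> R} :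
  row_measurable g -> row_measurable h -> row_measurable (fun x => g x + h x).
Proof. by move=> mg mh d S b mb; exact: measurable_funD (mg _ _ _ mb) (mh _ _ _ mb). Qed.

Lemma row_measurableM {m} {g h : 'rV[R]_m -> R} :
  row_measurable g -> row_measurable h -> row_measurable (fun x => g x * h x).
Proof. by move=> mg mh d S b mb; exact: measurable_funM (mg _ _ _ mb) (mh _ _ _ mb). Qed.

Definition cons_coords {m} {S : Type} (a : S -> R) (b : 'I_m -> S -> R) :
    'I_(1 + m) -> S -> R :=
  fun i s => if fintype.split (i : 'I_(1 + m)) is inr j then b j s else a s.

Lemma row_cons_coords m S (a : S -> R) (b : 'I_m -> S -> R) s :
  \row_i cons_coords a b i s = row_mx (\row_(_ < 1) a s) (\row_j b j s).
Proof.
by apply/rowP => i; rewrite !mxE /cons_coords; case: fintype.split => j; rewrite mxE.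
Qed.

Lemma measurable_cons_coords {m d} {S : measurableType d} {a : S -> R} {b : 'I_m -> S -> R} :
  measurable_fun setT a -> (forall j, measurable_fun setT (b j)) ->
  forall i, measurable_fun setT (cons_coords a b i).
Proof. by move=> ma mb i; rewrite /cons_coords; case: fintype.split. Qed.

Lemma row_measurable_slices m (g : 'rV[R]_(1 + m) -> \bar R) :
  row_measurable g -> row_measurable_fam (fun (s : R) y => g (row_mx (\row_(_ < 1) s) y)).
Proof.
move=> mg d S phi b mphi mb.
have := mg _ _ _ (measurable_cons_coords mphi mb).
by under eq_fun do rewrite row_cons_coords.
Qed.

Lemma row_measurable_slice m (g : 'rV[R]_(1 + m) -> \bar R) (s : R) :
  row_measurable g -> row_measurable (fun y => g (row_mx (\row_(_ < 1) s) y)).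
Proof.
by move=> mg d S b mb; exact: row_measurable_slices mg _ _ (cst s) b (measurable_cst s) mb.
Qed.

End RowMeasurable.

Section IteratedIntegral.
Context {R : realType}.
Local Open Scope ereal_scope.

Lemma leb_int_ge0 m (g : 'rV[R]_m -> \bar R) : (forall x, 0 <= g x) -> 0 <= leb_int g.
Proof.
elim: m g => [|m IH] g g0 /=; first exact: g0.
by apply: integral_ge0 => t _; apply: IH.
Qed.

Lemma measurable_leb_int m d (T : measurableType d) (F : T -> 'rV[R]_m -> \bar R) :
  (forall t y, 0 <= F t y) -> row_measurable_fam F ->
  measurable_fun setT (fun t => leb_int (F t)).
Proof.
elim: m d T F => [|m IH] d T F F0 mF /=.
  have := mF _ _ id (fun _ _ => 0%R) (@measurable_id _ _ setT) (fun _ => measurable_cst _).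
  by rewrite (thinmx0 (\row__ 0%R)).
pose f (p : T * R) := leb_int (fun y => F p.1 (row_mx (\row_(_ < 1) p.2) y)).
have mf : measurable_fun setT f.
  apply: IH => [p y|d' S phi b mphi mb]; first exact: F0.
  have msnd : measurable_fun setT (snd \o phi) := measurableT_comp measurable_snd mphi.
  have := mF _ _ _ _ (measurableT_comp measurable_fst mphi) (measurable_cons_coords msnd mb).
  by under eq_fun do rewrite row_cons_coords.
have f0 p : 0 <= f p by apply: leb_int_ge0 => y; exact: F0.
exact: (@measurable_fun_fubini_tonelli_F _ _ _ _ R lebesgue_measure f mf f0).
Qed.

Lemma measurable_leb_int_slice m (g : 'rV[R]_(1 + m) -> \bar R) :
  (forall x, 0 <= g x) -> row_measurable g ->
  measurable_fun setT (fun s : R => leb_int (fun y => g (row_mx (\row_(_ < 1) s) y))).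
Proof.
by move=> g0 mg; apply: measurable_leb_int; [move=> *; exact: g0 | exact: row_measurable_slices].
Qed.

Lemma le_leb_int m (g h : 'rV[R]_m -> \bar R) : (forall x, 0 <= g x) ->
  (forall x, g x <= h x) -> row_measurable g -> row_measurable h ->
  leb_int g <= leb_int h.
Proof.
elim: m g h => [|m IH] g h g0 gh mg mh /=; first exact: gh.
have h0 x : 0 <= h x := le_trans (g0 x) (gh x).
apply: ge0_le_integral => //.
- by move=> t _; apply: leb_int_ge0.
- exact: measurable_leb_int_slice.
- exact: measurable_leb_int_slice.
- by move=> t _; apply: IH => //; exact: row_measurable_slice.
Qed.

Lemma leb_intD m (g h : 'rV[R]_m -> \bar R) : (forall x, 0 <= g x) ->
  (forall x, 0 <= h x) -> row_measurable g -> row_measurable h ->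
  leb_int (fun x => g x + h x) = leb_int g + leb_int h.
Proof.
elim: m g h => [|m IH] g h g0 h0 mg mh //=.
rewrite -ge0_integralD //.
- by apply: eq_integral => t _; apply: IH => //; exact: row_measurable_slice.
- by move=> t _; apply: leb_int_ge0.
- exact: measurable_leb_int_slice.
- by move=> t _; apply: leb_int_ge0.
- exact: measurable_leb_int_slice.
Qed.

Lemma leb_intZl m (g : 'rV[R]_m -> \bar R) (k : R) : (forall x, 0 <= g x) ->
  (0 <= k)%R -> row_measurable g ->
  leb_int (fun x => k%:E * g x) = k%:E * leb_int g.
Proof.
elim: m g => [|m IH] g g0 k0 mg //=.
rewrite -ge0_integralZl //.
- by apply: eq_integral => t _; apply: IH => //; exact: row_measurable_slice.
- exact: measurable_leb_int_slice.
- by move=> t _; apply: leb_int_ge0.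
Qed.

End IteratedIntegral.

Section Continuity.
Context {R : realType}.

Lemma ball_rowE m (c y : 'rV[R]_m) r :
  ball c r y <-> 0 < r /\ forall j, `|c 0 j - y 0 j| < r.
Proof.
split=> [[r0 h]|[r0 h]]; first by split => // j; have := h 0 j.
by split => // i j; rewrite (ord1 i); apply: h.
Qed.

Lemma measurable_ball_preimage m d (S : measurableType d) (b : 'I_m -> S -> R)
    (c : 'rV[R]_m) r :
  (forall i, measurable_fun setT (b i)) -> 0 < r ->
  measurable [set s | ball c r (\row_i b i s)].
Proof.
move=> mb r0.
have -> : [set s | ball c r (\row_i b i s)] =
    \bigcap_(j in [set: 'I_m]) ((fun s => `|c 0 j - b j s|) @^-1` `]-oo, r[).
  apply/seteqP; split => s.
    by move/ball_rowE => [_ h] j _ /=; rewrite in_itv /=; have := h j; rewrite mxE.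
  move=> h; apply/ball_rowE; split => // j.
  by have := h j I; rewrite /= in_itv /= mxE.
apply: fin_bigcap_measurable; first exact: finite_finset.
move=> j _; rewrite -[X in measurable X]setTI.
have mf : measurable_fun setT (fun s => `|c 0 j - b j s|).
  exact: measurableT_comp (@normr_measurable R setT) (measurable_funB (measurable_cst _) (mb j)).
exact: mf measurableT _ (measurable_itv _).
Qed.

Definition rat_ball {m} (p : 'rV[rat]_m * nat) : set 'rV[R]_m :=
  ball (map_mx ratr p.1 : 'rV[R]_m) (p.2.+1%:R^-1).

Lemma open_rat_ball_cover {m} {U : set 'rV[R]_m} {x} : open U -> U x ->
  exists p, rat_ball p x /\ rat_ball p `<=` U.
Proof.
move=> oU Ux; have /nbhs_ballP [e e0 sub] := oU x Ux.
pose k := Num.trunc (2 / e).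
have k_gt0 : 0 < k.+1%:R^-1 :> R by rewrite invr_gt0 ltr0n.
have ke : k.+1%:R^-1 + k.+1%:R^-1 <= e.
  have := truncnS_gt (2 / e); rewrite ltr_pdivrMr // => h.
  by rewrite -mulr2n -[_ *+ 2]mulr_natl ler_pdivrMr ?ltr0n // mulrC ltW.
have /choice [q Hq] : forall j, exists q : rat, `|x 0 j - ratr q| < k.+1%:R^-1.
  move=> j; have [z [Bz [q _ qz]]] :=
    dense_rat (ex_intro _ (x 0 j) (ballxx (x 0 j) k_gt0)) (ball_open (x 0 j) _).
  by exists q; rewrite qz.
have xB : rat_ball (\row_j q j, k) x.
  by apply/ball_rowE; split => // j; rewrite !mxE distrC.
exists (\row_j q j, k); split => // z Bz; apply: sub.
exact: (le_ball ke) (ball_triangle (ball_sym xB) Bz).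
Qed.

Lemma measurable_open_preimage {m d} {S : measurableType d} {b : 'I_m -> S -> R}
    {U : set 'rV[R]_m} :
  (forall i, measurable_fun setT (b i)) -> open U -> measurable [set s | U (\row_i b i s)].
Proof.
move=> mb oU.
pose F p := if `[< rat_ball p `<=` U >] then [set s | rat_ball p (\row_i b i s)] else set0.
have -> : [set s | U (\row_i b i s)] = \bigcup_p F p.
  apply/seteqP; split => s /=; last first.
    by move=> [p _]; rewrite /F; case: asboolP => // sub Bp; exact: sub.
  move=> /(open_rat_ball_cover oU) [p [Bp sub]].
  by exists p => //; rewrite /F asboolT.
apply: countable_bigcupT_measurable; first exact: countableP.
move=> p; rewrite /F; case: asboolP => _; last exact: measurable0.
by apply: measurable_ball_preimage => //; rewrite invr_gt0 ltr0n.
Qed.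

Lemma continuous_row_measurable m (g : 'rV[R]_m -> R) : continuous g -> row_measurable g.
Proof.
move=> cg d S b mb.
apply: (measurability (@RGenOInfty.G R)) => [|/= _ [_ [r ->] <-]].
  exact: RGenOInfty.measurableE.
rewrite setTI.
by have := measurable_open_preimage mb (open_comp (fun x _ => cg x) (@rray_open _ R r)).
Qed.

Lemma locally_lipschitz_continuous m (f : 'rV[R]_m -> R) :
  locally_lipschitz f -> continuous f.
Proof.
move=> lf x; have [e [L [e0 H]]] := lf x.
move=> A /nbhs_ballP [eps /= eps0 sub].
have L1 : 0 < `|L| + 1 by rewrite ltr_wpDl.
pose del := Num.min e (eps / (`|L| + 1)).
have del0 : 0 < del by rewrite lt_min e0 divr_gt0.
apply/nbhs_ballP; exists del => // y By; apply: sub.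
have Bye : ball x e y by apply: le_ball By; rewrite ge_min lexx.
have hxy : `|x - y| < del by rewrite -ball_normE in By.
rewrite -ball_normE /=; apply: (le_lt_trans (H x y (ballxx x e0) Bye)).
apply: (le_lt_trans (ler_wpM2r (normr_ge0 _) (ler_norm L))).
apply: (@le_lt_trans _ _ ((`|L| + 1) * `|x - y|)); first by rewrite ler_wpM2r // lerDl.
rewrite mulrC -ltr_pdivlMr //; apply: lt_le_trans hxy _.
by rewrite ge_min lexx orbT.
Qed.

End Continuity.

Section GibbsIntegral.
Context {R : realType} {n : nat} (V : 'rV[R]_n -> R).
Hypothesis mV : row_measurable V.
Local Open Scope ereal_scope.

Lemma normalization_inv_ge0 : (0 <= (fine (Zconst V))^-1)%R.
Proof. by rewrite invr_ge0 fine_ge0 // leb_int_ge0 // => x; rewrite lee_fin expR_ge0. Qed.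

Lemma mu_int_ge0 {g : 'rV[R]_n -> R} : (forall x, 0 <= g x)%R -> 0 <= mu_int V g.
Proof.
move=> g0; apply: mule_ge0; last by rewrite lee_fin normalization_inv_ge0.
by apply: leb_int_ge0 => x; rewrite lee_fin mulr_ge0 // expR_ge0.
Qed.

Lemma row_measurable_weighted (g : 'rV[R]_n -> R) :
  row_measurable g -> row_measurable (fun x => (g x * expR (- V x))%:E).
Proof.
move=> mg.
have mE := row_measurable_comp mV
  (measurableT_comp (@measurable_expR R) (@oppr_measurable R setT)).
by have := row_measurable_comp (row_measurableM mg mE) (@EFin_measurable R setT).
Qed.

Lemma le_mu_int (g h : 'rV[R]_n -> R) : row_measurable g -> row_measurable h ->
  (forall x, 0 <= g x)%R -> (forall x, g x <= h x)%R -> mu_int V g <= mu_int V h.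
Proof.
move=> mg mh g0 gh; apply: lee_wpmul2r; first by rewrite lee_fin normalization_inv_ge0.
apply: le_leb_int; try exact: row_measurable_weighted.
- by move=> x; rewrite lee_fin mulr_ge0 // expR_ge0.
- by move=> x; rewrite lee_fin ler_wpM2r // expR_ge0.
Qed.

Lemma mu_int_comb (g h : 'rV[R]_n -> R) (k1 k2 : R) :
  row_measurable g -> row_measurable h ->
  (forall x, 0 <= g x)%R -> (forall x, 0 <= h x)%R -> (0 <= k1)%R -> (0 <= k2)%R ->
  mu_int V (fun x => k1 * g x + k2 * h x)%R = k1%:E * mu_int V g + k2%:E * mu_int V h.
Proof.
move=> mg mh g0 h0 k10 k20.
have wg0 x : 0 <= (g x * expR (- V x))%:E by rewrite lee_fin mulr_ge0 // expR_ge0.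
have wh0 x : 0 <= (h x * expR (- V x))%:E by rewrite lee_fin mulr_ge0 // expR_ge0.
have mZ k (u : 'rV[R]_n -> \bar R) : row_measurable u -> row_measurable (fun x => k%:E * u x).
  by move=> mu; apply: row_measurable_comp mu _; exact: measurable_funeM.
rewrite /mu_int (_ : (fun x => _) = (fun x => k1%:E * (g x * expR (- V x))%:E
    + k2%:E * (h x * expR (- V x))%:E)); last first.
  by apply/funext => x; rewrite -!EFinM -EFinD mulrDl !mulrA.
rewrite leb_intD; last 4 first.
- by move=> x; rewrite mule_ge0.
- by move=> x; rewrite mule_ge0.
- exact/mZ/row_measurable_weighted.
- exact/mZ/row_measurable_weighted.
rewrite !leb_intZl //; try exact: row_measurable_weighted.
by rewrite ge0_muleDl ?muleA // mule_ge0 ?lee_fin // leb_int_ge0.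
Qed.

End GibbsIntegral.

Lemma luxemburg_le {R : realType} {n} (V : 'rV[R]_n -> R) (Phi : R -> R)
    (f : 'rV[R]_n -> R) (lam : R) :
  0 < lam -> (mu_int V (fun x => Phi (`|f x| / lam)%R) <= 1%:E)%E ->
  (luxemburg V Phi f <= lam%:E)%E.
Proof. by move=> lam_gt0 h; apply: ereal_inf_lbound; exists lam. Qed.

Lemma luxemburg_ge0 {R : realType} {n} (V : 'rV[R]_n -> R) (Phi : R -> R)
    (f : 'rV[R]_n -> R) :
  (0 <= luxemburg V Phi f)%E.
Proof. by apply: le_ereal_inf_tmp => _ [l [l_gt0 _] <-]; rewrite lee_fin ltW. Qed.

Section OrliczEstimate.
Context {R : realType} {n : nat} {V : 'rV[R]_n -> R} {Phi : R -> R} {M C : R}.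
Hypotheses (mV : row_measurable V) (Y : young Phi) (M_gt0 : 0 < M) (C_ge0 : 0 <= C).
Hypothesis Phi_le : forall x, Phi x <= x ^+ 2 / M + C * `|x|.

Lemma mu_int_young_le {f : 'rV[R]_n -> R} {lam : R} : row_measurable f -> 0 < lam ->
  (mu_int V (fun x => Phi (`|f x| / lam)%R) <=
   (1 / (M * lam ^+ 2))%:E * mu_int V (fun x => f x ^+ 2)%R
   + (C / lam)%:E * mu_int V (fun x => `|f x|)%R)%E.
Proof.
move=> mf lam_gt0.
have mf2 : row_measurable (fun x => f x ^+ 2).
  by have := row_measurableM mf mf; under eq_fun do rewrite -expr2.
have mfabs : row_measurable (fun x => `|f x|).
  exact: row_measurable_comp mf (@normr_measurable R setT).
rewrite -mu_int_comb //; last 3 first.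
- by move=> x; rewrite sqr_ge0.
- by rewrite divr_ge0 // ltW // mulr_gt0 // exprn_gt0.
- by rewrite divr_ge0 // ltW.
apply: le_mu_int => //.
- have mq := row_measurable_comp mfabs (mulrr_measurable lam^-1).
  by have := row_measurable_comp mq (measurable_young Y).
- exact: row_measurableD (row_measurable_comp mf2 (mulrl_measurable _))
    (row_measurable_comp mfabs (mulrl_measurable _)).
- by move=> x; case: Y => _ _ ->.
move=> x; apply: le_trans (Phi_le _) _.
have -> : `| `|f x| / lam | = `|f x| / lam by rewrite ger0_norm // divr_ge0 // ltW.
rewrite expr_div_n real_normK ?num_real // le_eqVlt; apply/orP; left; apply/eqP.
by field; rewrite !gt_eqF.
Qed.

Lemma luxemburg_le_sqrt {f : 'rV[R]_n -> R} {a i : R} : row_measurable f ->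
  mu_int V (fun x => f x ^+ 2) = a%:E -> mu_int V (fun x => `|f x|) = i%:E ->
  (luxemburg V Phi f <= (Num.sqrt (2 * a / M) + 2 * C * i)%:E)%E.
Proof.
move=> mf fa fi; set s := Num.sqrt _.
have a_ge0 : 0 <= a by rewrite -lee_fin -fa mu_int_ge0 // => x; rewrite sqr_ge0.
have i_ge0 : 0 <= i by rewrite -lee_fin -fi mu_int_ge0.
have Ms : M * s ^+ 2 = 2 * a.
  rewrite /s sqr_sqrtr; last by rewrite divr_ge0 ?mulr_ge0 // ltW.
  by rewrite mulrC divfK // gt_eqF.
apply/lee_addgt0Pr => eta eta_gt0; rewrite -EFinD.
set lam := _ + eta.
have s_ge0 : 0 <= s := sqrtr_ge0 _.
have s_le : s <= lam by rewrite /lam -addrA lerDl addr_ge0 ?mulr_ge0 // ltW.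
have lam_gt0 : 0 < lam by rewrite /lam ltr_pwDr // addr_ge0 ?sqrtr_ge0 ?mulr_ge0.
apply: luxemburg_le => //; apply: (le_trans (mu_int_young_le mf lam_gt0)).
rewrite fa fi -!EFinM -EFinD lee_fin.
have quad : 2 * a <= M * lam ^+ 2.
  by rewrite -Ms ler_pM2l // ler_sqr // nnegrE ?sqrtr_ge0 ?(ltW lam_gt0).
have h1 : 1 / (M * lam ^+ 2) * a <= 1 / 2.
  by rewrite mul1r mulrC ler_pdivrMr ?mulr_gt0 ?exprn_gt0 //; lra.
have h2 : C / lam * i <= 1 / 2 by rewrite mulrAC ler_pdivrMr // /lam; lra.
lra.
Qed.

End OrliczEstimate.

Lemma absorb_half {R : realType} {a g i l b C s r : R} :
  0 <= g -> 0 <= i -> 0 <= l -> 0 <= b -> 0 <= C -> 0 <= s -> 0 <= r ->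
  (8 * b + 8) * s ^+ 2 = 2 * a -> l <= s + 2 * C * i ->
  a <= r / 2 * g + b * (l * l) -> a <= r * g + (16 * b * C ^+ 2 + 1) * (i * i).
Proof.
move=> g0 i0 l0 b0 C0 s0 r0 hs hl ha.
have hl2 : l * l <= 2 * s ^+ 2 + 8 * C ^+ 2 * (i * i).
  apply: le_trans (ler_pM l0 l0 hl hl) _; rewrite -subr_ge0.
  apply: le_trans (sqr_ge0 (s - 2 * C * i)) _.
  by rewrite le_eqVlt; apply/orP; left; apply/eqP; ring.
have hbs : 4 * b * s ^+ 2 <= a by nra.
have := ler_wpM2l b0 hl2.
have : 0 <= b * C ^+ 2 * (i * i) by rewrite !mulr_ge0 // sqr_ge0.
have : 0 <= i * i by rewrite mulr_ge0.
nra.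
Qed.

Lemma EFin_of_ge0_lty {R : realType} {x : \bar R} :
  (0 <= x)%E -> (x < +oo)%E -> exists2 a : R, x = a%:E & 0 <= a.
Proof. by case: x => [a||] //; rewrite lee_fin => a0 _; exists a. Qed.

Lemma super_poincare_L1_of_luxemburg {R : realType} {n : nat} {V : 'rV[R]_n -> R}
    {Phi : R -> R} {b C r : R} {f : 'rV[R]_n -> R} {G : \bar R} :
  row_measurable V -> young Phi -> 0 <= b -> 0 <= C -> 0 <= r ->
  (forall x, Phi x <= x ^+ 2 / (8 * b + 8) + C * `|x|) -> row_measurable f ->
  (mu_int V (fun x => f x ^+ 2)%R < +oo)%E -> (0 <= G)%E -> (G < +oo)%E ->
  (mu_int V (fun x => f x ^+ 2)%R
     <= (r / 2)%:E * G + b%:E * (luxemburg V Phi f * luxemburg V Phi f))%E ->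
  (mu_int V (fun x => f x ^+ 2)%R
     <= r%:E * G + (16 * b * C ^+ 2 + 1)%:E
          * (mu_int V (fun x => `|f x|)%R * mu_int V (fun x => `|f x|)%R))%E.
Proof.
move=> mV Y b0 C0 r0 Phi_le mf fin2 G0 Gfin hyp.
have M_gt0 : 0 < 8 * b + 8 by rewrite ltr_wpDl ?mulr_ge0.
have [a fa a0] := EFin_of_ge0_lty (mu_int_ge0 V (fun x => sqr_ge0 (f x))) fin2.
have [g Gg g0] := EFin_of_ge0_lty G0 Gfin.
have I0 := mu_int_ge0 V (fun x => normr_ge0 (f x)).
have [Ifin|Iinf] := ltP (mu_int V (fun x => `|f x|)) +oo%E; last first.
  (* the "+ 1" in the constant makes the right-hand side +oo here *)
  have -> : mu_int V (fun x => `|f x|) = +oo%E by apply/eqP; rewrite eq_le leey.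
  rewrite Gg mulyy gt0_muley ?lte_fin ?ltr_wpDl ?mulr_ge0 ?sqr_ge0 //.
  by rewrite -EFinM addey // leey.
have [i fi i0] := EFin_of_ge0_lty I0 Ifin.
have lux_le := luxemburg_le_sqrt mV Y M_gt0 C0 Phi_le mf fa fi.
have [l fl l0] := EFin_of_ge0_lty (luxemburg_ge0 V Phi f) (le_lt_trans lux_le (ltry _)).
move: hyp lux_le; rewrite fa fi fl Gg -!EFinM -!EFinD !lee_fin => hyp lux_le.
apply: (absorb_half g0 i0 l0 b0 C0 (sqrtr_ge0 _) r0 _ lux_le hyp).
rewrite sqr_sqrtr; last by rewrite divr_ge0 ?mulr_ge0 // ltW.
by rewrite mulrC divfK // gt_eqF.
Qed.

Theorem theorem3p3 (R : realType) (n : nat) (V : 'rV[R]_n -> R)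
  (Phi : R -> R) (r0 : R) (beta : R -> R) :
  smooth V ->
  (Zconst V < +oo)%E ->
  young Phi ->
  (forall y, has_ubound (legendre_set Phi y)) ->
  young (legendre Phi) ->
  (legendre Phi x / x ^+ 2) @[x --> +oo] --> +oo ->
  young (fun x => legendre Phi (Num.sqrt `|x|)) ->
  0 <= r0 ->
  (forall r, r0 < r -> 0 <= beta r) ->
  (forall r, r0 < r -> forall f, admissible V f ->
     (mu_int V (fun x => (f x ^+ 2)%R)
        <= r%:E * mu_int V (grad_sq f)
           + (beta r)%:E * (luxemburg V Phi f * luxemburg V Phi f))%E) ->
  exists beta' : R -> R,
    (forall r, 8 * r0 < r -> 0 <= beta' r) /\
    (forall r, 8 * r0 < r -> forall f, admissible V f ->
     (mu_int V (fun x => (f x ^+ 2)%R)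
        <= r%:E * mu_int V (grad_sq f)
           + (beta' r)%:E * (mu_int V (fun x => `|f x|%R) * mu_int V (fun x => `|f x|%R)))%E).
Proof.
move=> sV _ Y _ _ growth _ r0_ge0 beta_ge0 osp.
have mV : row_measurable V.
  by apply: continuous_row_measurable => x; exact: differentiable_continuous (sV [::] x).
have /choice [C hC] : forall M : R, exists C : R,
    0 <= C /\ (0 < M -> forall x, Phi x <= x ^+ 2 / M + C * `|x|).
  move=> M; have [M_gt0|_] := ltP 0 M; last by exists 0.
  by have [C C0 hC] := young_subquadratic Y growth M M_gt0; exists C.
have half r : 8 * r0 < r -> r0 < r / 2 by move=> ?; lra.
pose beta' r := 16 * beta (r / 2) * C (8 * beta (r / 2) + 8) ^+ 2 + 1.
exists beta'; split=> [r /half/beta_ge0 b0 | r hr f [lf f2 grad]].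
  by rewrite /beta' addr_ge0 // mulr_ge0 ?sqr_ge0 // mulr_ge0.
have b0 := beta_ge0 _ (half _ hr).
have [C0 Phi_le] := hC (8 * beta (r / 2) + 8).
apply: (super_poincare_L1_of_luxemburg mV Y b0 C0) => //.
- lra.
- by apply: Phi_le; rewrite ltr_wpDl ?mulr_ge0.
- exact/continuous_row_measurable/locally_lipschitz_continuous.
- by apply: mu_int_ge0 => x; apply: sumr_ge0 => i _; exact: sqr_ge0.
- exact: osp (half _ hr) f (And3 lf f2 grad).
Qed.
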